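(* Let $(M,\Delta,S,\varepsilon)$ be a weak Kac algebra, let $I_s=\{y\in M: yx=y\,\varepsilon_s(x)\ \forall x\in M\}$ and $I_t=\{y\in M: xy=\varepsilon_t(x)\,y\ \forall x\in M\}$. Then $I_s\cap I_t=\{y\in M: y=p_\varepsilon\, y\, p_\varepsilon\}$, where $p_\varepsilon$ is the support of $\varepsilon$.
   Context: All algebras are finite-dimensional over $\mathbb{C}$; $\varsigma$ denotes the flip and $\mu(x\otimes y)=xy$. A weak Kac algebra is a quadruple $(M,\Delta,S,\varepsilon)$ where $M$ is a finite-dimensional $C^*$-algebra; $\Delta:M\to M\otimes M$ is an injective, not necessarily unital, $*$-homomorphism with $(\Delta\otimes\mathrm{id})\Delta=(\mathrm{id}\otimes\Delta)\Delta$; $S:M\to M$ is a linear, unital, antimultiplicative, $*$-preserving bijection with $S^2=\mathrm{id}$ and $(S\otimes S)\circ\Delta=\varsigma\circ\Delta\circ S$; and $\varepsilon:M\to\mathbb{C}$ is linear with $(\varepsilon\otimes\mathrm{id})\Delta=(\mathrm{id}\otimes\varepsilon)\Delta=\mathrm{id}$, $\varepsilon\circ S=\varepsilon$, $\varepsilon(x^* )=\overline{\varepsilon(x)}$, $(\varepsilon\otimes\varepsilon)((x\otimes1)e(1\otimes y))=\varepsilon(xy)$ for all $x,y$, where $e:=\Delta(1)$, and $(\varepsilon_s\otimes\mathrm{id})\Delta(x)=(1\otimes x)e$ for all $x$, where $\varepsilon_s:=\mu(S\otimes\mathrm{id})\Delta$; also $\varepsilon_t:=\mu(\mathrm{id}\otimes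 S)\Delta$. The functional $\varepsilon$ is positive on $M$; its support $p_\varepsilon$ is the smallest projection $p\in M$ with $\varepsilon(1-p)=0$, equivalently the minimal nonzero projection $p$ with $\varepsilon(xp)=\varepsilon(px)=\varepsilon(x)$ for all $x\in M$. *)

(* Finite-dimensional C*-algebras are modelled concretely as
   unital *-subalgebras of a full matrix algebra 'M[CC]_n over the complex
   numbers CC := R[i] (R = the classical real numbers of Stdlib, as an rcfType),
   with * = conjugate transpose.  The (C*-)tensor product M (x) M is realized
   inside 'M_(n*n) via the Kronecker product  *t  (mathcomp real_closed/mxtens). *)
From HB Require Import structures.
From mathcomp Require Import all_boot all_order all_algebra.
From mathcomp Require Import complex mxtens.
From mathcomp Require Import Rstruct.

Set Implicit Arguments.
Unset Strict Implicit.
Unset Printing Implicit Defensive.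

Import Order.TTheory GRing.Theory Num.Theory.
Local Open Scope ring_scope.

Definition CC : numClosedFieldType := (Rdefinitions.R)[i].

Definition mxstar m (A : 'M[CC]_m) : 'M[CC]_m := (map_mx Num.conj A)^T.

(* index of the pair (i,k) in 'I_(n*n), compatible with the Kronecker product:
   (A *t B) (tidx i k) (tidx j l) = A i j * B k l *)
Definition tidx n (i k : 'I_n) : 'I_(n * n) := mxtens_index (i, k).

(* Linear extension to 'M_n (x) 'M_n ~ 'M_(n*n) of a bilinear map h:
   T = \sum T_(ik,jl) E_ij (x) E_kl  |->  \sum T_(ik,jl) h E_ij E_kl. *)
Definition tbil n (V : lmodType CC) (h : 'M[CC]_n -> 'M[CC]_n -> V)
    (T : 'M[CC]_(n * n)) : V :=
  \sum_(i < n) \sum_(j < n) \sum_(k < n) \sum_(l < n)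
     T (tidx i k) (tidx j l) *: h (delta_mx i j) (delta_mx k l).

Definition tbils n (h : 'M[CC]_n -> 'M[CC]_n -> CC) (T : 'M[CC]_(n * n)) : CC :=
  \sum_(i < n) \sum_(j < n) \sum_(k < n) \sum_(l < n)
     T (tidx i k) (tidx j l) * h (delta_mx i j) (delta_mx k l).

Definition tmap n p q (f : 'M[CC]_n -> 'M[CC]_p) (g : 'M[CC]_n -> 'M[CC]_q)
    (T : 'M[CC]_(n * n)) : 'M[CC]_(p * q) :=
  tbil (fun a b => f a *t g b) T.

Definition tflip n (T : 'M[CC]_(n * n)) : 'M[CC]_(n * n) :=
  tbil (fun a b => b *t a) T.

Definition tmul n (f g : 'M[CC]_n -> 'M[CC]_n) (T : 'M[CC]_(n * n)) : 'M[CC]_n :=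
  tbil (fun a b => f a *m g b) T.

Definition tfunl n (phi : 'M[CC]_n -> CC) (T : 'M[CC]_(n * n)) : 'M[CC]_n :=
  tbil (fun a b => phi a *: b) T.
Definition tfunr n (phi : 'M[CC]_n -> CC) (T : 'M[CC]_(n * n)) : 'M[CC]_n :=
  tbil (fun a b => phi b *: a) T.

Definition tassoc n (T : 'M[CC]_(n * (n * n))) : 'M[CC]_(n * n * n) :=
  castmx (mulnA n n n, mulnA n n n) T.

Definition in_tens n (M : 'M[CC]_n -> Prop) (T : 'M[CC]_(n * n)) : Prop :=
  exists k (a b : 'I_k -> 'M[CC]_n),
    (forall r, M (a r) /\ M (b r)) /\ T = \sum_(r < k) (a r *t b r).

Definition eps_s n (Delta : 'M[CC]_n -> 'M[CC]_(n * n)) (S : 'M[CC]_n -> 'M[CC]_n)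
    (x : 'M[CC]_n) : 'M[CC]_n := tmul S id (Delta x).
Definition eps_t n (Delta : 'M[CC]_n -> 'M[CC]_(n * n)) (S : 'M[CC]_n -> 'M[CC]_n)
    (x : 'M[CC]_n) : 'M[CC]_n := tmul id S (Delta x).

Definition star_subalg n (M : 'M[CC]_n -> Prop) : Prop :=
  [/\ M 0, M 1%:M,
      (forall a x y, M x -> M y -> M (a *: x + y)),
      (forall x y, M x -> M y -> M (x *m y)) &
      (forall x, M x -> M (mxstar x))].

Definition lin_map n p (f : 'M[CC]_n -> 'M[CC]_p) : Prop :=
  forall (a : CC) x y, f (a *: x + y) = a *: f x + f y.
Definition lin_fun n (f : 'M[CC]_n -> CC) : Prop :=
  forall (a : CC) x y, f (a *: x + y) = a * f x + f y.

(* Weak Kac algebra (M, Delta, S, eps).  Delta, S, eps are given as linear maps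
   on the ambient 'M_n (any linear map on M extends linearly); all axioms are
   required on M only. *)
Record weak_kac n (M : 'M[CC]_n -> Prop) (Delta : 'M[CC]_n -> 'M[CC]_(n * n))
    (S : 'M[CC]_n -> 'M[CC]_n) (eps : 'M[CC]_n -> CC) : Prop := WeakKac {
  wk_M : star_subalg M;
  wk_Delta_lin : lin_map Delta;
  wk_Delta_range : forall x, M x -> in_tens M (Delta x);
  wk_Delta_inj : forall x y, M x -> M y -> Delta x = Delta y -> x = y;
  wk_Delta_mul : forall x y, M x -> M y -> Delta (x *m y) = Delta x *m Delta y;
  wk_Delta_star : forall x, M x -> Delta (mxstar x) = mxstar (Delta x);
  wk_coassoc : forall x, M x ->
     tmap Delta id (Delta x) = tassoc (tmap id Delta (Delta x));
  wk_S_lin : lin_map S;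
  wk_S_range : forall x, M x -> M (S x);
  wk_S_bij : forall y, M y -> exists2 x, M x & S x = y;
  wk_S_unital : S 1%:M = 1%:M;
  wk_S_antimul : forall x y, M x -> M y -> S (x *m y) = S y *m S x;
  wk_S_star : forall x, M x -> S (mxstar x) = mxstar (S x);
  wk_S_invol : forall x, M x -> S (S x) = x;
  wk_S_Delta : forall x, M x -> tmap S S (Delta x) = tflip (Delta (S x));
  wk_eps_lin : lin_fun eps;
  wk_eps_counitl : forall x, M x -> tfunl eps (Delta x) = x;
  wk_eps_counitr : forall x, M x -> tfunr eps (Delta x) = x;
  wk_eps_S : forall x, M x -> eps (S x) = eps x;
  wk_eps_star : forall x, M x -> eps (mxstar x) = Num.conj (eps x);
  wk_eps_mul : forall x y, M x -> M y ->
     tbils (fun a b => eps a * eps b)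
       ((x *t (1%:M : 'M[CC]_n)) *m Delta 1%:M *m ((1%:M : 'M[CC]_n) *t y))
     = eps (x *m y);
  wk_eps_s : forall x, M x ->
     tmap (eps_s Delta S) id (Delta x) = ((1%:M : 'M[CC]_n) *t x) *m Delta 1%:M
}.

Definition is_proj n (M : 'M[CC]_n -> Prop) (p : 'M[CC]_n) : Prop :=
  [/\ M p, p *m p = p & mxstar p = p].

(* p is the support of eps: the smallest projection p of M with eps(1-p) = 0
   (order on projections: p <= q iff p q = p) *)
Definition is_support n (M : 'M[CC]_n -> Prop) (eps : 'M[CC]_n -> CC)
    (p : 'M[CC]_n) : Prop :=
  [/\ is_proj M p, eps (1%:M - p) = 0 &
      forall q, is_proj M q -> eps (1%:M - q) = 0 -> p *m q = p].

Definition in_Is n (M : 'M[CC]_n -> Prop) Delta S (y : 'M[CC]_n) : Prop :=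
  M y /\ forall x, M x -> y *m x = y *m eps_s Delta S x.
Definition in_It n (M : 'M[CC]_n -> Prop) Delta S (y : 'M[CC]_n) : Prop :=
  M y /\ forall x, M x -> x *m y = eps_t Delta S x *m y.

From Pilot Require Import Defs.
From HB Require Import structures.
From mathcomp Require Import all_boot all_order all_algebra.
From mathcomp Require Import complex mxtens.
From mathcomp Require Import Rstruct.
From mathcomp Require Import ring.
Set Implicit Arguments.
Unset Strict Implicit.
Unset Printing Implicit Defensive.
Import Order.TTheory GRing.Theory Num.Theory.
Local Open Scope ring_scope.

(* Let e := Delta 1.  For x in M one has eps (eps_s x * w) = eps (x * w) for all w in M,
   and the support p kills every z in M with eps (z M) = 0: the kernel projection C of
   z z^* is a polynomial in z z^*, hence lies in M, and eps (1 - C) = 0, so p <= C.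
   Thus p x = p eps_s x and x p = eps_t x p, whence p M p is contained in I_s /\ I_t.
   Conversely y in I_s /\ I_t satisfies y (1 - p) = y eps_s (1 - p) and
   (1 - p) y = eps_t (1 - p) y, so it suffices that v := eps_s (1 - p) vanishes.
   Now v is self-adjoint, p v = 0 and eps (v v^* ) = eps (1 - p) = 0.  Moreover v lies in
   the *-subalgebra M_s = {y | Delta y = (1 (x) y) e = e (1 (x) y)}, on which
   tr y = eps (g y) for the positive invertible g := (id (x) tr o S) e; hence eps is
   faithful on M_s and v = 0. *)

(** * Linear and bilinear maps *)

Section ComplexLinear.
Variables U V : lmodType CC.

Definition clinear (f : U -> V) := forall a x y, f (a *: x + y) = a *: f x + f y.

Variables (f : U -> V) (f_lin : clinear f).

Lemma clinear0 : f 0 = 0.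
Proof. by have := f_lin 1 0 0; rewrite !scale1r addr0 -{1}[f 0]addr0 => /addrI. Qed.

Lemma clinearD x y : f (x + y) = f x + f y.
Proof. by have := f_lin 1 x y; rewrite !scale1r. Qed.

Lemma clinearZ a x : f (a *: x) = a *: f x.
Proof. by rewrite -[a *: x]addr0 f_lin clinear0 addr0. Qed.

Lemma clinearB x y : f (x - y) = f x - f y.
Proof. by rewrite clinearD -scaleN1r clinearZ scaleN1r. Qed.

Lemma clinear_sum I (r : seq I) (P : pred I) (F : I -> U) :
  f (\sum_(i <- r | P i) F i) = \sum_(i <- r | P i) f (F i).
Proof. exact: (big_morph f clinearD clinear0). Qed.

End ComplexLinear.

Notation clinear_form := (@clinear _ CC^o).

Lemma clinear_id (U : lmodType CC) : clinear (@id U).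
Proof. by []. Qed.

Section KroneckerLinear.
Variables m1 m2 p1 p2 : nat.

Lemma tensmx_linl (B : 'M[CC]_(p1, p2)) : clinear (fun A : 'M[CC]_(m1, m2) => A *t B).
Proof. by move=> a A A'; apply/matrixP => i j; rewrite !mxE mulrDl mulrA. Qed.

Lemma tensmx_linr (A : 'M[CC]_(m1, m2)) : clinear (fun B : 'M[CC]_(p1, p2) => A *t B).
Proof. by move=> a B B'; apply/matrixP => i j; rewrite !mxE mulrDr mulrCA. Qed.

End KroneckerLinear.

Section TensorExtension.
Variable n : nat.
Local Notation MM := 'M[CC]_n.

Definition cbilinear (V : lmodType CC) (h : MM -> MM -> V) :=
  (forall b, clinear (h^~ b)) /\ (forall a, clinear (h a)).

Lemma tbil_lin (V : lmodType CC) (h : MM -> MM -> V) : clinear (tbil h).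
Proof.
move=> a T T'; rewrite /tbil scaler_sumr -big_split; apply: eq_bigr => i _.
rewrite scaler_sumr -big_split; apply: eq_bigr => j _.
rewrite scaler_sumr -big_split; apply: eq_bigr => k _.
rewrite scaler_sumr -big_split; apply: eq_bigr => l _.
by rewrite !mxE scalerDl scalerA.
Qed.

Lemma tbil_tens (V : lmodType CC) (h : MM -> MM -> V) (A B : MM) :
  cbilinear h -> tbil h (A *t B) = h A B.
Proof.
move=> [hl hr]; rewrite {2}(matrix_sum_delta A) (clinear_sum (hl _)).
apply: eq_bigr => i _; rewrite (clinear_sum (hl _)); apply: eq_bigr => j _.
rewrite (clinearZ (hl _)) {2}(matrix_sum_delta B) (clinear_sum (hr _)) scaler_sumr.
apply: eq_bigr => k _; rewrite (clinear_sum (hr _)) scaler_sumr; apply: eq_bigr => l _.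
by rewrite (clinearZ (hr _)) scalerA /tidx tensmxE.
Qed.

Lemma tbil_sum (V : lmodType CC) (h : MM -> MM -> V) : cbilinear h ->
  forall k (a b : 'I_k -> MM), tbil h (\sum_(r < k) a r *t b r) = \sum_(r < k) h (a r) (b r).
Proof.
by move=> hb k a b; rewrite (clinear_sum (tbil_lin h)); apply: eq_bigr => r _; apply: tbil_tens.
Qed.

Lemma eq_tbil (V : lmodType CC) (h h' : MM -> MM -> V) T :
  h =2 h' -> tbil h T = tbil h' T.
Proof.
move=> eq_h; rewrite /tbil; apply: eq_bigr => i _; apply: eq_bigr => j _.
by apply: eq_bigr => k _; apply: eq_bigr => l _; rewrite eq_h.
Qed.

(* [tbils] is [tbil] with values in the regular module [CC^o]; scalar-valued linear
   maps are handled throughout as [CC^o]-valued ones. *)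
Lemma tbils_sum (h : MM -> MM -> CC) : cbilinear (V := CC^o) h ->
  forall k (a b : 'I_k -> MM), tbils h (\sum_(r < k) a r *t b r) = \sum_(r < k) h (a r) (b r).
Proof. exact: (@tbil_sum CC^o). Qed.

Lemma cbilinear_tmap p q (f : MM -> 'M[CC]_p) (g : MM -> 'M[CC]_q) :
  clinear f -> clinear g -> cbilinear (fun a b => f a *t g b).
Proof.
move=> hf hg; split=> [b|a] c x y /=; first by rewrite hf tensmx_linl.
by rewrite hg tensmx_linr.
Qed.

Lemma cbilinear_tmul (f g : MM -> MM) :
  clinear f -> clinear g -> cbilinear (fun a b => f a *m g b).
Proof.
move=> hf hg; split=> [b|a] c x y /=; first by rewrite hf mulmxDl scalemxAl.
by rewrite hg mulmxDr scalemxAr.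
Qed.

Lemma cbilinear_flip : cbilinear (fun a b : MM => b *t a).
Proof. by split=> [b|a] c x y /=; rewrite ?tensmx_linl ?tensmx_linr. Qed.

Lemma cbilinear_funl (phi : MM -> CC) :
  clinear_form phi -> cbilinear (fun a b => phi a *: b).
Proof.
move=> hp; split=> [b|a] c x y /=; first by rewrite hp scalerDl scalerA.
by rewrite scalerDr !scalerA mulrC.
Qed.

Lemma cbilinear_funr (phi : MM -> CC) :
  clinear_form phi -> cbilinear (fun a b => phi b *: a).
Proof.
move=> hp; split=> [b|a] c x y /=; last by rewrite hp scalerDl scalerA.
by rewrite scalerDr !scalerA mulrC.
Qed.

Lemma cbilinear_mul (f g : MM -> CC) :
  clinear_form f -> clinear_form g -> cbilinear (V := CC^o) (fun a b => f a * g b).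
Proof.
move=> hf hg; split=> [b|a] c x y /=; first by rewrite hf mulrDl -scalerAl.
by rewrite hg !(mulrC (f a)) mulrDl -scalerAl.
Qed.

End TensorExtension.

(** * Adjoints, Kronecker products and positivity *)

Section Adjoint.
Variable m : nat.
Implicit Types A B : 'M[CC]_m.

Lemma mxstarM A B : mxstar (A *m B) = mxstar B *m mxstar A.
Proof. by rewrite /mxstar map_mxM trmx_mul. Qed.

Lemma mxstarK : involutive (@mxstar m).
Proof. by move=> A; apply/matrixP => i j; rewrite !mxE conjCK. Qed.

Lemma mxstar_conjlin a A B : mxstar (a *: A + B) = Num.conj a *: mxstar A + mxstar B.
Proof. by apply/matrixP => i j; rewrite !mxE rmorphD rmorphM. Qed.

Lemma mxstarZ a A : mxstar (a *: A) = Num.conj a *: mxstar A.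
Proof. by apply/matrixP => i j; rewrite !mxE rmorphM. Qed.

Lemma mxstarB A B : mxstar (A - B) = mxstar A - mxstar B.
Proof. by apply/matrixP => i j; rewrite !mxE rmorphB. Qed.

Lemma mxstar0 : mxstar (0 : 'M[CC]_m) = 0.
Proof. by rewrite /mxstar map_mx0 trmx0. Qed.

Lemma mxstar1 : mxstar (1%:M : 'M[CC]_m) = 1%:M.
Proof. by rewrite /mxstar map_mx1 trmx1. Qed.

Lemma mxstar_sum I (r : seq I) (P : pred I) (F : I -> 'M[CC]_m) :
  mxstar (\sum_(i <- r | P i) F i) = \sum_(i <- r | P i) mxstar (F i).
Proof.
apply: (big_morph _ _ mxstar0) => A B.
by apply/matrixP => i j; rewrite !mxE rmorphD.
Qed.

Lemma mxstar_tens A B : mxstar (A *t B) = mxstar A *t mxstar B.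
Proof. by rewrite /mxstar map_mxT trmx_tens. Qed.

Lemma mxstarX A k : mxstar A = A -> mxstar (A ^+ k) = A ^+ k.
Proof.
move=> hA; elim: k => [|k IH]; first by rewrite !expr0 mxstar1.
rewrite exprS; change (mxstar (A *m A ^+ k) = A *m A ^+ k).
by rewrite mxstarM IH hA; apply/esym/commrX.
Qed.

End Adjoint.

Lemma conj_star_lin m (lam : 'M[CC]_m -> CC) :
  clinear_form lam -> clinear_form (fun c => Num.conj (lam (mxstar c))).
Proof. by move=> hl c x y; rewrite mxstar_conjlin hl rmorphD rmorphM /= conjCK. Qed.

Section TripleTensor.
Variable n : nat.
Local Notation MM := 'M[CC]_n.

Lemma tensmx11 : (1%:M : MM) *t (1%:M : MM) = 1%:M.
Proof.
apply/matrixP => x y.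
case: (mxtens_indexP x) => i k; case: (mxtens_indexP y) => j l.
rewrite tensmxE !mxE (inj_eq (can_inj (@mxtens_indexK _ _))) xpair_eqE.
by case: (i == j); case: (k == l); rewrite ?mulr1n ?mulr0n ?mulr1 ?mulr0.
Qed.

Lemma tassoc_lin : clinear (@tassoc n).
Proof. by move=> a X Y; apply/matrixP => i j; rewrite /tassoc castmxE !mxE !castmxE. Qed.

Lemma tassoc_tens (A B C : MM) : tassoc (A *t (B *t C)) = (A *t B) *t C.
Proof.
have cast_idx i k l : cast_ord (esym (mulnA n n n)) (mxtens_index (mxtens_index (i, k), l))
    = mxtens_index (i, mxtens_index (k, l)).
  by apply: val_inj => /=; rewrite mulnDl -mulnA addnA.
apply/matrixP => x y.
case: (mxtens_indexP x) => I l; case: (mxtens_indexP I) => i k.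
case: (mxtens_indexP y) => J l'; case: (mxtens_indexP J) => j k'.
by rewrite /tassoc castmxE !cast_idx !tensmxE mulrA.
Qed.

(* [id (x) id (x) lam] on ['M_n (x) 'M_n (x) 'M_n] *)
Definition tfunr3 (lam : MM -> CC) (T : 'M[CC]_(n * n * n)) : 'M[CC]_(n * n) :=
  \matrix_(I, J) \sum_(l < n) \sum_(l' < n)
     T (mxtens_index (I, l)) (mxtens_index (J, l')) * lam (delta_mx l l').

Lemma tfunr3_lin lam : clinear (tfunr3 lam).
Proof.
move=> a T T'; apply/matrixP => I J; rewrite !mxE mulr_sumr -big_split.
apply: eq_bigr => l _; rewrite mulr_sumr -big_split; apply: eq_bigr => l' _.
by rewrite !mxE mulrDl mulrA.
Qed.

Lemma tfunr3_tens lam (X : 'M[CC]_(n * n)) (d : MM) :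
  clinear_form lam -> tfunr3 lam (X *t d) = lam d *: X.
Proof.
move=> hl; apply/matrixP => I J; rewrite !mxE.
rewrite [in RHS](matrix_sum_delta d) (clinear_sum hl) mulr_suml; apply: eq_bigr => l _.
rewrite (clinear_sum hl) mulr_suml; apply: eq_bigr => l' _.
rewrite tensmxE (clinearZ hl) -mulrA mulrC; congr (_ * _); exact: mulrC.
Qed.

Lemma tfunr3_tassoc lam (A : MM) k (c d : 'I_k -> MM) : clinear_form lam ->
  tfunr3 lam (tassoc (A *t \sum_(r < k) c r *t d r))
  = A *t tfunr lam (\sum_(r < k) c r *t d r).
Proof.
move=> hl; rewrite (clinear_sum (tensmx_linr A)) (clinear_sum tassoc_lin).
rewrite (clinear_sum (tfunr3_lin lam)) /tfunr tbil_sum; last exact: cbilinear_funr.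
rewrite (clinear_sum (tensmx_linr A)); apply: eq_bigr => r _.
by rewrite tassoc_tens tfunr3_tens // (clinearZ (tensmx_linr A)).
Qed.

End TripleTensor.

Section Positivity.
Variable m : nat.
Implicit Types (A B : 'M[CC]_m) (u w xi : 'cV[CC]_m).

Definition adjv (xi : 'cV[CC]_m) : 'rV[CC]_m := (map_mx Num.conj xi)^T.

Definition qform (A : 'M[CC]_m) (xi : 'cV[CC]_m) : CC := (adjv xi *m A *m xi) 0 0.

Definition vcoord (xi : 'cV[CC]_m) (i : 'I_m) (A : 'M[CC]_m) : CC := (A *m xi) i 0.

Lemma qform_lin xi : clinear_form (fun c => qform c xi).
Proof. by move=> a A B; rewrite /qform mulmxDr mulmxDl -scalemxAr -scalemxAl !mxE. Qed.

Lemma vcoord_lin xi i : clinear_form (vcoord xi i).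
Proof. by move=> a A B; rewrite /vcoord mulmxDl -scalemxAl !mxE. Qed.

Lemma qform_star_mul A B xi :
  qform (mxstar A *m B) xi = \sum_(i < m) Num.conj (vcoord xi i A) * vcoord xi i B.
Proof.
rewrite /qform /vcoord /adjv /mxstar !mulmxA -trmx_mul -map_mxM -mulmxA mxE.
by apply: eq_bigr => i _; rewrite !mxE.
Qed.

Lemma mxtrace_mul_star_ge0 B : 0 <= \tr (B *m mxstar B).
Proof.
apply: sumr_ge0 => i _; rewrite mxE; apply: sumr_ge0 => j _.
by rewrite !mxE mul_conjC_ge0.
Qed.

Lemma mxtrace_mul_star_eq0 B : \tr (B *m mxstar B) = 0 -> B = 0.
Proof.
have entry_ge0 i j : 0 <= B i j * (mxstar B) j i by rewrite !mxE mul_conjC_ge0.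
move=> /eqP; rewrite psumr_eq0 => [/allP trB0|i _]; last first.
  by rewrite mxE; apply: sumr_ge0.
apply/matrixP => i j; have := trB0 i (mem_index_enum _).
rewrite implyTb mxE psumr_eq0 // => /allP/(_ j (mem_index_enum _)).
by rewrite implyTb !mxE mul_conjC_eq0 => /eqP.
Qed.

Lemma mul_star_eq0 B : B *m mxstar B = 0 -> B = 0.
Proof. by move=> BB0; apply: mxtrace_mul_star_eq0; rewrite BB0 mxtrace0. Qed.

Lemma star_mul_eq0 B : mxstar B *m B = 0 -> B = 0.
Proof.
by rewrite -{2}[B]mxstarK => /mul_star_eq0 B0; rewrite -[B]mxstarK B0 mxstar0.
Qed.

Lemma adjv_conjlin a u w : adjv (a *: u + w) = Num.conj a *: adjv u + adjv w.
Proof. by apply/matrixP => i j; rewrite !mxE rmorphD rmorphM. Qed.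

Lemma adjv_herm A u : mxstar A = A -> adjv u *m A = adjv (A *m u).
Proof. by move=> hA; rewrite -{1}hA /mxstar /adjv -trmx_mul -map_mxM. Qed.

Lemma adjv_mul_ge0 w : 0 <= (adjv w *m w) 0 0.
Proof. by rewrite mxE; apply: sumr_ge0 => i _; rewrite !mxE mulrC mul_conjC_ge0. Qed.

Lemma adjv_mul_eq0 w : (adjv w *m w) 0 0 = 0 -> w = 0.
Proof.
rewrite mxE => /eqP; rewrite psumr_eq0 => [/allP w0|i _]; last first.
  by rewrite !mxE mulrC mul_conjC_ge0.
apply/matrixP => i j; rewrite [j]ord1 mxE.
by have := w0 i (mem_index_enum _); rewrite implyTb !mxE mulrC mul_conjC_eq0 => /eqP.
Qed.

(* For [w := A u], the form [s |-> (s w + u)^* A (s w + u)] is a real quadratic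
   [s^2 b + 2 s a] with [a = w^* w], [b = w^* A w]; nonnegativity forces [a = 0]. *)
Lemma psd_qform_eq0 A u : mxstar A = A -> (forall xi, 0 <= qform A xi) ->
  qform A u = 0 -> A *m u = 0.
Proof.
move=> hA A_psd Au0; set w := A *m u.
pose a := (adjv w *m w) 0 0; pose b := qform A w.
have a_ge0 : 0 <= a by exact: adjv_mul_ge0.
have b_ge0 : 0 <= b by exact: A_psd.
have qform_line s : qform A (s *: w + u) = Num.conj s * s * b + (Num.conj s + s) * a.
  have wAu : adjv w *m A *m u = adjv w *m w by rewrite -mulmxA.
  have uAw : adjv u *m A *m w = adjv w *m w by rewrite (adjv_herm _ hA).
  rewrite /qform adjv_conjlin !mulmxDl !mulmxDr -!scalemxAl -!scalemxAr wAu uAw !mxE.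
  have -> : \sum_j (adjv w *m A) 0 j * w j 0 = b by rewrite /b /qform mxE.
  have -> : \sum_j adjv w 0 j * w j 0 = a by rewrite /a mxE.
  have -> : \sum_j (adjv u *m A) 0 j * u j 0 = 0 by rewrite -[RHS]Au0 /qform mxE.
  ring.
have b1_neq0 : b + 1 != 0 by rewrite gt_eqF // ltr_wpDl.
pose s := - (a / (b + 1)).
have s_real : Num.conj s = s.
  by rewrite /s rmorphN /= geC0_conj // divr_ge0 // addr_ge0.
have := A_psd (s *: w + u); rewrite qform_line s_real.
have -> : s * s * b + (s + s) * a = - (a ^+ 2 * (b + 2%:R) / (b + 1) ^+ 2).
  by rewrite /s; field.
rewrite oppr_ge0 => le0.
have : a ^+ 2 * (b + 2%:R) / (b + 1) ^+ 2 = 0.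
  apply/eqP; rewrite eq_le le0 /= divr_ge0 ?exprn_ge0 ?addr_ge0 //.
  by rewrite mulr_ge0 ?exprn_ge0 ?addr_ge0.
move/eqP; rewrite !mulf_eq0 invr_eq0 !expf_eq0 /= (negPf b1_neq0) orbF.
rewrite orbb [b + _ == 0]gt_eqF ?ltr_wpDl // orbF => /eqP a0.
exact: adjv_mul_eq0.
Qed.

Lemma mxtrace_star_mul_qform B A :
  \tr (mxstar B *m A *m B) = \sum_(j < m) qform A (col j B).
Proof.
apply: eq_bigr => j _; rewrite /qform /adjv !mxE; apply: eq_bigr => k _.
by rewrite !mxE; congr (_ * _); apply: eq_bigr => l _; rewrite !mxE.
Qed.

End Positivity.

Lemma drop_poly1_mulX (R : nzRingType) (q : {poly R}) :
  q`_0 = 0 -> q = drop_poly 1 q * 'X.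
Proof.
move=> q0; rewrite -{1}(poly_take_drop 1 q) expr1 -[RHS]add0r; congr (_ + _).
by apply/polyP => i; rewrite coef_take_poly coef0; case: i.
Qed.

Section HermitianPolynomial.
Variable m : nat.
Local Notation MM := 'M[CC]_m.+1.
Implicit Types h X : MM.

Lemma trmx_horner h (q : {poly CC}) : (horner_mx h q)^T = horner_mx h^T q.
Proof.
elim/poly_ind: q => [|q c IH]; first by rewrite !rmorph0 trmx0.
rewrite !rmorphD !rmorphM /= !horner_mx_X !horner_mx_C raddfD /= trmx_mul IH tr_scalar_mx.
by congr (_ + _); apply: comm_mx_horner; rewrite /comm_mx.
Qed.

Lemma horner_mx_closed (A : MM -> Prop) :
  A 0 -> A 1%:M -> (forall a x y, A x -> A y -> A (a *: x + y)) ->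
  (forall x y, A x -> A y -> A (x *m y)) ->
  forall h q, A h -> A (horner_mx h q).
Proof.
move=> A0 A1 A_lin A_mul h q Ah; elim/poly_ind: q => [|q c IH]; first by rewrite rmorph0.
have -> : horner_mx h (q * 'X + c%:P) = 1 *: (horner_mx h q *m h) + c *: 1%:M.
  by rewrite rmorphD rmorphM /= horner_mx_X horner_mx_C scale1r scalemx1.
by apply: (A_lin); [apply: A_mul | rewrite -[c *: _]addr0; apply: A_lin].
Qed.

Lemma herm_expr_mul_eq0 h X k : mxstar h = h -> h ^+ k *m X = 0 -> h *m X = 0.
Proof.
move=> hh; case: k => [|k]; first by rewrite expr0 mul1mx => ->; rewrite mulmx0.
elim: k => [|k IH] hkX; first by rewrite expr1 in hkX.
apply: IH; apply: star_mul_eq0.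
rewrite mxstarM (mxstarX _ hh) -mulmxA (mulmxA (h ^+ k.+1)).
rewrite -[h ^+ k.+1 *m h ^+ k.+1]/(h ^+ k.+1 * h ^+ k.+1) -exprD.
have -> : (k.+1 + k.+1 = k + k.+2)%N by rewrite !addSn !addnS.
by rewrite exprD -[h ^+ k * h ^+ k.+2]/(h ^+ k *m h ^+ k.+2) -mulmxA hkX !mulmx0.
Qed.

(* [chi_h * conj chi_h] has real coefficients and kills [h]; strip its factor [X^k]. *)
Lemma real_annihilator h : exists k (q : {poly CC}),
  [/\ map_poly Num.conj q = q, q`_0 = 1 & horner_mx h q *m h ^+ k = 0].
Proof.
pose P := char_poly h; pose Q := P * map_poly Num.conj P.
have P_neq0 : P != 0 by apply: monic_neq0; apply: char_poly_monic.
have Q_neq0 : Q != 0 by rewrite mulf_neq0 ?map_poly_eq0.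
have conj_polyK (p : {poly CC}) : map_poly Num.conj (map_poly Num.conj p) = p.
  by apply/polyP => i; rewrite !coef_map /= conjCK.
have Q_real : map_poly Num.conj Q = Q by rewrite rmorphM /= conj_polyK mulrC.
have [k [q0 /implyP/(_ Q_neq0)/rootPf q00 Q_def]] := multiplicity_XsubC Q 0.
rewrite subr0 in Q_def.
have q0_real : map_poly Num.conj q0 = q0.
  move: Q_real; rewrite Q_def rmorphM rmorphXn /= map_polyX.
  by move/mulIf; apply; rewrite expf_neq0 // polyX_eq0.
exists k, ((q0`_0)^-1 *: q0); split.
- apply/polyP => i; rewrite coef_map /= !coefZ rmorphM /= fmorphV.
  by congr (_ * _); rewrite -[in RHS]q0_real coef_map.
- by rewrite coefZ mulVf // -horner_coef0 q00.
- have : horner_mx h Q = 0 by rewrite rmorphM /= Cayley_Hamilton mul0r.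
  rewrite Q_def rmorphM rmorphXn /= horner_mx_X => q0h.
  by rewrite horner_mxZ -scalemxAl mulmxE q0h scaler0.
Qed.

Lemma kernel_projection h : mxstar h = h -> exists q r : {poly CC},
  let C := horner_mx h q in
  [/\ C *m C = C, mxstar C = C, h *m C = 0 & 1%:M - C = horner_mx h r *m h].
Proof.
move=> hh; have [k [q [q_real q0 qhk]]] := real_annihilator h.
exists q, (drop_poly 1 (1 - q)) => C.
have hC : h *m C = 0.
  apply: (@herm_expr_mul_eq0 _ _ k) => //.
  have := comm_mx_horner q (commr_sym (commrX k (commr_refl h))).
  by rewrite /comm_mx => ->.
set r := drop_poly 1 (1 - q).
have CE : 1%:M - C = horner_mx h r *m h.
  have -> : horner_mx h r *m h = horner_mx h (r * 'X) by rewrite rmorphM /= horner_mx_X.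
  rewrite -drop_poly1_mulX; last by rewrite coefB coef1 q0 subrr.
  by rewrite rmorphB /= -polyC1 horner_mx_C.
split=> //.
- have CR : C *m horner_mx h r = horner_mx h r *m C := comm_horner_mx2 h q r.
  have Ch : C *m h = h *m C := comm_horner_mx q (commr_refl h).
  have : C *m (1%:M - C) = 0 by rewrite CE mulmxA CR -mulmxA Ch hC mulmx0.
  by rewrite mulmxBr mulmx1 => /eqP; rewrite subr_eq0 eq_sym => /eqP.
- have hT : map_mx Num.conj h = h^T by rewrite -[map_mx _ h]trmxK; congr _^T.
  by rewrite /mxstar map_horner_mx q_real hT trmx_horner trmxK.
Qed.

End HermitianPolynomial.

(** * Weak Kac algebras *)

Section WeakKacAlgebra.
Variables (n : nat) (M : 'M[CC]_n -> Prop) (Delta : 'M[CC]_n -> 'M[CC]_(n * n))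
  (S : 'M[CC]_n -> 'M[CC]_n) (eps : 'M[CC]_n -> CC).
Hypothesis W : weak_kac M Delta S eps.
Local Notation MM := 'M[CC]_n.
Local Notation e := (Delta 1%:M).
Local Notation eps_s := (eps_s Delta S).
Local Notation eps_t := (eps_t Delta S).

Let Delta_lin : clinear Delta := wk_Delta_lin W.
Let S_lin : clinear S := wk_S_lin W.
Let eps_lin : clinear_form eps := wk_eps_lin W.

Lemma M0 : M 0.
Proof. by case: (wk_M W). Qed.

Lemma M1 : M 1%:M.
Proof. by case: (wk_M W). Qed.

Lemma M_lin a x y : M x -> M y -> M (a *: x + y).
Proof. by case: (wk_M W) => _ _ + _ _; apply. Qed.

Lemma M_mul x y : M x -> M y -> M (x *m y).
Proof. by case: (wk_M W) => _ _ _ + _; apply. Qed.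

Lemma M_star x : M x -> M (mxstar x).
Proof. by case: (wk_M W) => _ _ _ _; apply. Qed.

Lemma M_S x : M x -> M (S x).
Proof. exact: (wk_S_range W). Qed.

Lemma MZ a x : M x -> M (a *: x).
Proof. by move=> hx; rewrite -[_ *: _]addr0; apply: M_lin => //; apply: M0. Qed.

Lemma MB x y : M x -> M y -> M (x - y).
Proof. by move=> hx hy; rewrite -scaleN1r addrC; apply: M_lin. Qed.

Lemma M_sum I (r : seq I) (P : pred I) (F : I -> MM) :
  (forall i, P i -> M (F i)) -> M (\sum_(i <- r | P i) F i).
Proof.
move=> MF; elim/big_rec: _ => [|i x Pi Mx]; first exact: M0.
by rewrite -[F i]scale1r; apply: M_lin => //; apply: MF.
Qed.

Lemma eps_mulr_lin x : clinear_form (fun c : MM => eps (x *m c)).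
Proof. by move=> a c d /=; rewrite mulmxDr -scalemxAr eps_lin. Qed.
Lemma eps_mull_lin y : clinear_form (fun c : MM => eps (c *m y)).
Proof. by move=> a c d /=; rewrite mulmxDl -scalemxAl eps_lin. Qed.

Lemma eps_s_sum x k (a b : 'I_k -> MM) :
  Delta x = \sum_(r < k) a r *t b r -> eps_s x = \sum_(r < k) S (a r) *m b r.
Proof. by move=> hD; rewrite /Defs.eps_s /tmul hD tbil_sum //; apply: cbilinear_tmul. Qed.

Lemma eps_t_sum x k (a b : 'I_k -> MM) :
  Delta x = \sum_(r < k) a r *t b r -> eps_t x = \sum_(r < k) a r *m S (b r).
Proof. by move=> hD; rewrite /Defs.eps_t /tmul hD tbil_sum //; apply: cbilinear_tmul. Qed.

Lemma eps_s_lin : clinear eps_s.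
Proof. by move=> a x y; rewrite /Defs.eps_s /tmul Delta_lin tbil_lin. Qed.

Lemma M_eps_s x : M x -> M (eps_s x).
Proof.
move=> hx; have [k [a [b [hab hD]]]] := wk_Delta_range W hx.
rewrite (eps_s_sum hD); apply: M_sum => r _; case: (hab r) => ha hb.
by apply: M_mul => //; exact: M_S.
Qed.

Lemma M_eps_t x : M x -> M (eps_t x).
Proof.
move=> hx; have [k [a [b [hab hD]]]] := wk_Delta_range W hx.
rewrite (eps_t_sum hD); apply: M_sum => r _; case: (hab r) => ha hb.
by apply: M_mul => //; exact: M_S.
Qed.

Lemma Delta_S_sum y k (c d : 'I_k -> MM) : M y -> Delta y = \sum_(r < k) c r *t d r ->
  Delta (S y) = \sum_(r < k) S (d r) *t S (c r).
Proof.
move=> hy hD; have [k' [c' [d' [_ hD']]]] := wk_Delta_range W (M_S hy).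
move: (congr1 (@tflip _) (wk_S_Delta W hy)).
by rewrite hD hD' /tflip /tmap !tbil_sum //;
  first [exact: cbilinear_flip | exact: cbilinear_tmap S_lin S_lin].
Qed.

Lemma eps_tE y : M y -> eps_t y = S (eps_s (S y)).
Proof.
move=> hy; have [k [c [d [hcd hD]]]] := wk_Delta_range W hy.
rewrite (eps_t_sum hD) (eps_s_sum (Delta_S_sum hy hD)) (clinear_sum S_lin).
apply: eq_bigr => r _; case: (hcd r) => hc hd.
by rewrite (wk_S_invol W hd) (wk_S_antimul W hd (M_S hc)) (wk_S_invol W hc).
Qed.

Lemma eps_s_star x : M x -> mxstar (eps_s x) = eps_s (mxstar (S x)).
Proof.
move=> hx; have [k [c [d [hcd hD]]]] := wk_Delta_range W hx.
have hD' : Delta (mxstar (S x)) = \sum_(r < k) S (mxstar (d r)) *t S (mxstar (c r)).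
  rewrite (wk_Delta_star W (M_S hx)) (Delta_S_sum hx hD) mxstar_sum; apply: eq_bigr => r _.
  by case: (hcd r) => hc hd; rewrite mxstar_tens -(wk_S_star W hc) -(wk_S_star W hd).
rewrite (eps_s_sum hD) (eps_s_sum hD') mxstar_sum; apply: eq_bigr => r _.
by case: (hcd r) => hc hd; rewrite mxstarM (wk_S_invol W (M_star hd)) (wk_S_star W hc).
Qed.

Lemma tmap_eps_s_e : tmap eps_s id e = e.
Proof. by rewrite (wk_eps_s W M1) tensmx11 mul1mx. Qed.

Lemma eps_s_slice x : M x -> eps_s x = tfunr (fun c => eps (x *m c)) e.
Proof.
move=> hx; have [k [a [b [_ hD]]]] := wk_Delta_range W hx.
have [k' [a' [b' [_ he]]]] := wk_Delta_range W M1.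
have /(congr1 (tfunr eps)) := wk_eps_s W hx.
rewrite hD /tmap tbil_sum; last exact: cbilinear_tmap eps_s_lin (@clinear_id _).
rewrite /tfunr tbil_sum; last exact: cbilinear_funr.
under eq_bigr do rewrite -(clinearZ eps_s_lin).
rewrite -(clinear_sum eps_s_lin).
have -> : \sum_(i < k) eps (b i) *: a i = x.
  by rewrite -[RHS](wk_eps_counitr W hx) hD /tfunr tbil_sum //; apply: cbilinear_funr.
move=> ->; rewrite he mulmx_sumr.
under eq_bigr do rewrite tensmx_mul mul1mx.
by rewrite !tbil_sum //; apply: cbilinear_funr => //; apply: eps_mulr_lin.
Qed.

Lemma eps_s1 : eps_s 1%:M = 1%:M.
Proof.
rewrite (eps_s_slice M1) -[RHS](wk_eps_counitr W M1).
by apply: eq_tbil => a b; rewrite mul1mx.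
Qed.

Lemma eps_t1 : eps_t 1%:M = 1%:M.
Proof. by rewrite (eps_tE M1) (wk_S_unital W) eps_s1 (wk_S_unital W). Qed.

Lemma e_flip_sum (V : lmodType CC) (h : MM -> MM -> V) k (a b : 'I_k -> MM) :
  cbilinear h -> e = \sum_(r < k) a r *t b r ->
  \sum_(r < k) h (b r) (a r) = \sum_(r < k) h (S (a r)) (S (b r)).
Proof.
move=> hb he; have := wk_S_Delta W M1; rewrite (wk_S_unital W).
move=> /(congr1 (tbil h)); rewrite he /tmap /tflip.
by rewrite !tbil_sum //; first [exact: cbilinear_flip | exact: cbilinear_tmap S_lin S_lin].
Qed.

Lemma e_star_sum (V : lmodType CC) (h : MM -> MM -> V) k (a b : 'I_k -> MM) :
  cbilinear h -> e = \sum_(r < k) a r *t b r ->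
  \sum_(r < k) h (mxstar (a r)) (mxstar (b r)) = \sum_(r < k) h (a r) (b r).
Proof.
move=> hb he; have := wk_Delta_star W M1; rewrite mxstar1 he mxstar_sum.
under [in X in _ = X -> _]eq_bigr do rewrite mxstar_tens.
by move=> /(congr1 (tbil h)); rewrite !tbil_sum.
Qed.

Lemma e_star : mxstar e = e.
Proof. by rewrite -(wk_Delta_star W M1) mxstar1. Qed.

Lemma e_idem : e *m e = e.
Proof. by rewrite -(wk_Delta_mul W M1 M1) mulmx1. Qed.

Lemma eps_mul_sum x y k (a b : 'I_k -> MM) : M x -> M y ->
  e = \sum_(r < k) a r *t b r ->
  eps (x *m y) = \sum_(r < k) eps (x *m a r) * eps (b r *m y).
Proof.
move=> hx hy he; rewrite -(wk_eps_mul W hx hy) he mulmx_sumr mulmx_suml.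
under eq_bigr do rewrite !tensmx_mul mulmx1 mul1mx.
by rewrite tbils_sum //; apply: cbilinear_mul.
Qed.

Lemma eps_mulS x y : M x -> M y -> eps (x *m S y) = eps (y *m S x).
Proof.
move=> hx hy; rewrite -[RHS](wk_eps_S W (M_mul hy (M_S hx))).
by rewrite (wk_S_antimul W hy (M_S hx)) (wk_S_invol W hx).
Qed.

Lemma eps_Smul x y : M x -> M y -> eps (S x *m y) = eps (S y *m x).
Proof.
move=> hx hy; rewrite -[RHS](wk_eps_S W (M_mul (M_S hy) hx)).
by rewrite (wk_S_antimul W (M_S hy) hx) (wk_S_invol W hy).
Qed.

Lemma eps_star_mul x y : M x -> M y ->
  eps (mxstar x *m y) = Num.conj (eps (mxstar y *m x)).
Proof. by move=> hx hy; rewrite -(wk_eps_star W (M_mul (M_star hy) hx)) mxstarM mxstarK. Qed.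

Lemma eps_mul_star x y : M x -> M y ->
  eps (x *m mxstar y) = Num.conj (eps (y *m mxstar x)).
Proof. by move=> hx hy; rewrite -(wk_eps_star W (M_mul hy (M_star hx))) mxstarM mxstarK. Qed.

(* [eps_s x] is a slice of [e]; flip [e] with [S (x) S], then use [e^* = e] to land on
   the Sweedler form of [eps ((S y S x)^* )]. *)
Lemma eps_mul_eps_s x y : M x -> M y -> eps (eps_s x *m y) = eps (x *m y).
Proof.
move=> hx hy; have [k [a [b [hab he]]]] := wk_Delta_range W M1.
have MSx := M_S hx; have MSy := M_S hy.
rewrite (eps_s_slice hx) he /tfunr tbil_sum; last exact: cbilinear_funr (eps_mulr_lin x).
rewrite mulmx_suml (clinear_sum eps_lin).
under eq_bigr do rewrite -scalemxAl (clinearZ eps_lin).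
rewrite (e_flip_sum (cbilinear_mul (eps_mulr_lin x) (eps_mull_lin y)) he) /=.
transitivity (\sum_(r < k) eps (mxstar (a r) *m S x) * eps (S y *m mxstar (b r))).
  rewrite (e_star_sum (cbilinear_mul (eps_mull_lin (S x)) (eps_mulr_lin (S y))) he) /=.
  by apply: eq_bigr => r _; case: (hab r) => ha hb; rewrite eps_mulS // eps_Smul.
transitivity
  (Num.conj (\sum_(r < k) eps (mxstar (S x) *m a r) * eps (b r *m mxstar (S y)))).
  rewrite rmorph_sum; apply: eq_bigr => r _; case: (hab r) => ha hb.
  by rewrite rmorphM /= (eps_star_mul ha MSx) (eps_mul_star MSy hb).
rewrite -(eps_mul_sum (M_star MSx) (M_star MSy) he) -mxstarM.
rewrite (wk_eps_star W (M_mul MSy MSx)) conjCK -(wk_S_antimul W hx hy).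
exact: (wk_eps_S W (M_mul hx hy)).
Qed.

Lemma eps_mul_eps_t x y : M x -> M y -> eps (x *m eps_t y) = eps (x *m y).
Proof.
move=> hx hy; have MSy := M_S hy.
rewrite (eps_tE hy) (eps_mulS hx (M_eps_s MSy)) (eps_mul_eps_s MSy (M_S hx)).
by rewrite -(wk_S_antimul W hx hy) (wk_eps_S W (M_mul hx hy)).
Qed.

Lemma eps_t_slice y : M y -> eps_t y = tfunl (fun c => eps (c *m y)) e.
Proof.
move=> hy; have [k [a [b [hab he]]]] := wk_Delta_range W M1.
rewrite (eps_tE hy) (eps_s_slice (M_S hy)) he /tfunr /tfunl.
rewrite (tbil_sum (cbilinear_funl (eps_mull_lin y))).
rewrite (tbil_sum (cbilinear_funr (eps_mulr_lin (S y)))).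
rewrite (clinear_sum S_lin).
under eq_bigr do rewrite (clinearZ S_lin).
rewrite (e_flip_sum (cbilinear_funr (eps_mull_lin y)) he) /=.
by apply: eq_bigr => r _; case: (hab r) => _ hb; rewrite eps_Smul.
Qed.

Lemma M_tfunr lam : clinear_form lam -> M (tfunr lam e).
Proof.
move=> hl; have [k [a [b [hab he]]]] := wk_Delta_range W M1.
rewrite he /tfunr (tbil_sum (cbilinear_funr hl)).
by apply: M_sum => r _; apply: MZ; case: (hab r).
Qed.

Lemma M_tfunl lam : clinear_form lam -> M (tfunl lam e).
Proof.
move=> hl; have [k [a [b [hab he]]]] := wk_Delta_range W M1.
rewrite he /tfunl (tbil_sum (cbilinear_funl hl)).
by apply: M_sum => r _; apply: MZ; case: (hab r).
Qed.

Section Slices.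
Variable lam : MM -> CC.
Hypothesis lam_lin : clinear_form lam.
Local Notation z := (tfunr lam e).

Let slice_Delta_lin : clinear (fun b => tfunr lam (Delta b)).
Proof. by move=> c x y; rewrite /tfunr Delta_lin tbil_lin. Qed.

(* apply [id (x) id (x) lam] to the coassociativity of [e] *)
Lemma Delta_slice : Delta z = tmap id (fun b => tfunr lam (Delta b)) e.
Proof.
have [k [a [b [hab he]]]] := wk_Delta_range W M1.
transitivity (tfunr3 lam (tmap Delta id e)).
  rewrite he /tmap /tfunr (tbil_sum (cbilinear_funr lam_lin)).
  rewrite (tbil_sum (cbilinear_tmap Delta_lin (@clinear_id _))).
  rewrite (clinear_sum Delta_lin) (clinear_sum (tfunr3_lin lam)); apply: eq_bigr => r _.
  by rewrite tfunr3_tens // (clinearZ Delta_lin).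
rewrite (wk_coassoc W M1) he /tmap (tbil_sum (cbilinear_tmap (@clinear_id _) slice_Delta_lin)).
rewrite (tbil_sum (cbilinear_tmap (@clinear_id _) Delta_lin)).
rewrite (clinear_sum (@tassoc_lin n)) (clinear_sum (tfunr3_lin lam)); apply: eq_bigr => r _.
case: (hab r) => _ hb; have [k' [c [d [_ hD]]]] := wk_Delta_range W hb.
by rewrite hD tfunr3_tassoc.
Qed.

Lemma Delta_slice_l : Delta z = (1%:M *t z) *m e.
Proof.
have [k [a [b [_ he]]]] := wk_Delta_range W M1.
rewrite -(wk_eps_s W (M_tfunr lam_lin)) Delta_slice -[in LHS]tmap_eps_s_e he /tmap.
by rewrite !tbil_sum //; apply: cbilinear_tmap => //; apply: eps_s_lin.
Qed.

End Slices.

Lemma slice_star lam : clinear_form lam ->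
  mxstar (tfunr lam e) = tfunr (fun c => Num.conj (lam (mxstar c))) e.
Proof.
move=> hl; have [k [a [b [_ he]]]] := wk_Delta_range W M1; have hl' := conj_star_lin hl.
rewrite he /tfunr (tbil_sum (cbilinear_funr hl)) (tbil_sum (cbilinear_funr hl')).
rewrite -(e_star_sum (cbilinear_funr hl') he) mxstar_sum /=.
by apply: eq_bigr => r _; rewrite mxstarZ mxstarK.
Qed.

Lemma eq_slice lam lam' : clinear_form lam -> clinear_form lam' ->
  (forall c, M c -> lam c = lam' c) -> tfunr lam e = tfunr lam' e.
Proof.
move=> hl hl' eq_lam; have [k [a [b [hab he]]]] := wk_Delta_range W M1.
rewrite he /tfunr (tbil_sum (cbilinear_funr hl)) (tbil_sum (cbilinear_funr hl')).
by apply: eq_bigr => r _; case: (hab r) => _ hb; rewrite eq_lam.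
Qed.

Lemma Delta_slice_r lam : clinear_form lam ->
  Delta (tfunr lam e) = e *m (1%:M *t tfunr lam e).
Proof.
move=> hl; set lam' := fun c => Num.conj (lam (mxstar c)); have hl' := conj_star_lin hl.
have lam'' : tfunr (fun c => Num.conj (lam' (mxstar c))) e = tfunr lam e.
  by apply: eq_tbil => a b; rewrite /lam' mxstarK conjCK.
rewrite -[tfunr lam e]mxstarK (slice_star hl) -/lam'.
rewrite (wk_Delta_star W (M_tfunr hl')) (Delta_slice_l hl') mxstarM e_star.
by rewrite mxstar_tens mxstar1 (slice_star hl') lam''.
Qed.

Definition in_Ms y :=
  [/\ M y, Delta y = (1%:M *t y) *m e & Delta y = e *m (1%:M *t y)].

Lemma Ms_slice lam : clinear_form lam -> in_Ms (tfunr lam e).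
Proof. by move=> hl; split; [exact: M_tfunr | exact: Delta_slice_l | exact: Delta_slice_r]. Qed.

Lemma Ms1 : in_Ms 1%:M.
Proof. by split; [exact: M1 | rewrite tensmx11 mul1mx | rewrite tensmx11 mulmx1]. Qed.

Lemma Ms_lin a x y : in_Ms x -> in_Ms y -> in_Ms (a *: x + y).
Proof.
move=> [hx x_l x_r] [hy y_l y_r]; split; first exact: M_lin.
- by rewrite Delta_lin x_l y_l tensmx_linr mulmxDl scalemxAl.
- by rewrite Delta_lin x_r y_r tensmx_linr mulmxDr scalemxAr.
Qed.

Lemma Ms0 : in_Ms 0.
Proof. by have := Ms_lin (-1) Ms1 Ms1; rewrite scaleN1r addNr. Qed.

Lemma Ms_mul x y : in_Ms x -> in_Ms y -> in_Ms (x *m y).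
Proof.
move=> [hx x_l x_r] [hy y_l y_r]; split; first exact: M_mul.
- rewrite (wk_Delta_mul W hx hy) x_l y_l mulmxA -(mulmxA _ e) -y_r y_l !mulmxA.
  by rewrite -(mulmxA _ e e) e_idem tensmx_mul mulmx1.
- rewrite (wk_Delta_mul W hx hy) x_r y_r !mulmxA -(mulmxA e) -x_l x_r !mulmxA e_idem.
  by rewrite -!mulmxA tensmx_mul mulmx1.
Qed.

Lemma Ms_star x : in_Ms x -> in_Ms (mxstar x).
Proof.
move=> [hx x_l x_r]; split; first exact: M_star.
- by rewrite (wk_Delta_star W hx) x_r mxstarM e_star mxstar_tens mxstar1.
- by rewrite (wk_Delta_star W hx) x_l mxstarM e_star mxstar_tens mxstar1.
Qed.

Lemma Ms_eps_s x : M x -> in_Ms (eps_s x).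
Proof. by move=> hx; rewrite (eps_s_slice hx); apply: Ms_slice; apply: eps_mulr_lin. Qed.

Lemma eps_t_Ms y : in_Ms y -> eps_t y = S y.
Proof.
move=> [hy y_l _]; have [k [a [b [hab he]]]] := wk_Delta_range W M1.
have St := cbilinear_tmul (@clinear_id _) S_lin.
have := eps_t1; rewrite {1}/Defs.eps_t /tmul he (tbil_sum St) => e_t1.
rewrite /Defs.eps_t /tmul y_l he mulmx_sumr.
under eq_bigr do rewrite tensmx_mul mul1mx.
rewrite (tbil_sum St) -[RHS]mul1mx -e_t1 mulmx_suml; apply: eq_bigr => r _.
by case: (hab r) => _ hb; rewrite (wk_S_antimul W hy hb) mulmxA.
Qed.

Lemma tr_S_lin : clinear_form (fun c : MM => \tr (S c)).
Proof. by move=> a x y; rewrite S_lin mxtraceD mxtraceZ. Qed.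

Definition tr_density := tfunr (fun c => \tr (S c)) e.

Lemma Ms_tr_density : in_Ms tr_density.
Proof. exact: Ms_slice tr_S_lin. Qed.

Lemma mxtrace_Ms y : in_Ms y -> \tr y = eps (tr_density *m y).
Proof.
move=> Ms_y; have [hy _ _] := Ms_y; have [k [a [b [_ he]]]] := wk_Delta_range W M1.
rewrite -{1}(wk_S_invol W hy) -(eps_t_Ms Ms_y) (eps_t_slice hy) /tr_density he.
rewrite /tfunr /tfunl.
rewrite (tbil_sum (cbilinear_funr tr_S_lin)) (tbil_sum (cbilinear_funl (eps_mull_lin y))).
rewrite (clinear_sum tr_S_lin) mulmx_suml (clinear_sum eps_lin); apply: eq_bigr => r _.
rewrite (clinearZ tr_S_lin) -scalemxAl (clinearZ eps_lin); exact: mulrC.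
Qed.

Lemma tr_density_herm : mxstar tr_density = tr_density.
Proof.
rewrite /tr_density (slice_star tr_S_lin).
apply: (eq_slice (conj_star_lin tr_S_lin) tr_S_lin) => c hc.
rewrite (wk_S_star W hc) /mxtrace rmorph_sum.
by apply: eq_bigr => i _; rewrite /mxstar !mxE; exact: conjCK.
Qed.

(* expand [e = e^* e] *)
Lemma qform_slice_sos (xi : 'cV[CC]_n) :
  tfunl (fun c => qform c xi) e
  = \sum_(i < n) mxstar (tfunl (vcoord xi i) e) *m tfunl (vcoord xi i) e.
Proof.
have [k [a [b [_ he]]]] := wk_Delta_range W M1.
have A_sum i : tfunl (vcoord xi i) e = \sum_(r < k) vcoord xi i (a r) *: b r.
  by rewrite he /tfunl (tbil_sum (cbilinear_funl (vcoord_lin xi i))).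
transitivity (\sum_(i < n) \sum_(r < k) \sum_(s < k)
                mxstar (vcoord xi i (a r) *: b r) *m (vcoord xi i (a s) *: b s)); last first.
  apply: eq_bigr => i _; rewrite A_sum mxstar_sum mulmx_suml.
  by apply: eq_bigr => r _; rewrite mulmx_sumr.
rewrite -{1}e_idem -{1}e_star he mxstar_sum mulmx_suml /tfunl (clinear_sum (tbil_lin _)).
under eq_bigr do rewrite mulmx_sumr (clinear_sum (tbil_lin _)).
under eq_bigr do under eq_bigr do
  rewrite mxstar_tens tensmx_mul (tbil_tens _ _ (cbilinear_funl (qform_lin xi))) qform_star_mul.
rewrite [RHS]exchange_big; apply: eq_bigr => r _.
rewrite [RHS]exchange_big; apply: eq_bigr => s _.
rewrite scaler_suml; apply: eq_bigr => i _.
by rewrite mxstarZ -scalemxAl -scalemxAr scalerA.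
Qed.

Lemma tr_density_psd xi : 0 <= qform tr_density xi.
Proof.
have [k [a [b [_ he]]]] := wk_Delta_range W M1.
have MA i := M_tfunl (vcoord_lin xi i).
have -> : qform tr_density xi = \tr (S (tfunl (fun c => qform c xi) e)).
  rewrite /tr_density he /tfunr /tfunl (tbil_sum (cbilinear_funr tr_S_lin)).
  rewrite (tbil_sum (cbilinear_funl (qform_lin xi))) (clinear_sum (qform_lin xi)).
  rewrite (clinear_sum tr_S_lin); apply: eq_bigr => r _.
  rewrite (clinearZ (qform_lin xi)) (clinearZ tr_S_lin); exact: mulrC.
rewrite qform_slice_sos (clinear_sum tr_S_lin); apply: sumr_ge0 => i _.
rewrite (wk_S_antimul W (M_star (MA i)) (MA i)) (wk_S_star W (MA i)).
exact: mxtrace_mul_star_ge0.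
Qed.

End WeakKacAlgebra.

(** * The support of the counit *)

Section Support.
Variables (n : nat) (M : 'M[CC]_n.+1 -> Prop) (Delta : 'M[CC]_n.+1 -> 'M[CC]_(n.+1 * n.+1))
  (S : 'M[CC]_n.+1 -> 'M[CC]_n.+1) (eps : 'M[CC]_n.+1 -> CC) (p : 'M[CC]_n.+1).
Hypothesis W : weak_kac M Delta S eps.
Hypothesis p_supp : is_support M eps p.
Local Notation eps_s := (eps_s Delta S).
Local Notation eps_t := (eps_t Delta S).
Local Notation g := (tr_density Delta S).

Lemma M_horner h q : M h -> M (horner_mx h q).
Proof. exact: (horner_mx_closed (M0 W) (M1 W) (M_lin W) (M_mul W)). Qed.

Lemma Ms_horner h q : in_Ms M Delta h -> in_Ms M Delta (horner_mx h q).
Proof. exact: (horner_mx_closed (Ms0 W) (Ms1 W) (Ms_lin W) (Ms_mul W)). Qed.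

Lemma M_supp : M p.
Proof. by case: p_supp => [[]]. Qed.

Lemma supp_idem : p *m p = p.
Proof. by case: p_supp => [[]]. Qed.

Lemma supp_herm : mxstar p = p.
Proof. by case: p_supp => [[]]. Qed.

(* The kernel projection [C] of [z z^* ] satisfies [eps (1 - C) = 0], so [p <= C]. *)
Lemma supp_mul_eq0 z : M z -> (forall w, M w -> eps (z *m w) = 0) -> p *m z = 0.
Proof.
move=> hz z_null; pose h := z *m mxstar z.
have hh : mxstar h = h by rewrite /h mxstarM mxstarK.
have Mh : M h by apply: M_mul W _ _ hz (M_star W hz).
have [q [r [C_idem C_herm hC CE]]] := kernel_projection hh.
set C := horner_mx h q in C_idem C_herm hC CE.
have pC : p *m C = p.
  case: p_supp => _ _; apply; first by split=> //; apply: M_horner.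
  rewrite CE (comm_horner_mx r (commr_refl h)) /h -mulmxA.
  by apply: z_null; apply: M_mul W _ _ (M_star W hz) (M_horner r Mh).
have Ch : C *m h = 0 by rewrite -C_herm -hh -mxstarM hC mxstar0.
have ph : p *m h = 0 by rewrite -pC -mulmxA Ch mulmx0.
apply: mul_star_eq0; rewrite mxstarM -mulmxA (mulmxA z) -/h.
by rewrite mulmxA ph mul0mx.
Qed.

Lemma mul_supp_eq0 z : M z -> (forall w, M w -> eps (w *m z) = 0) -> z *m p = 0.
Proof.
move=> hz null_z; rewrite -[z]mxstarK -supp_herm -mxstarM.
rewrite (supp_mul_eq0 (M_star W hz)) ?mxstar0 // => w hw.
have Mw' := M_star W hw.
by rewrite (eps_star_mul W hz hw) null_z // rmorph0.
Qed.

Lemma supp_mul_eps_s x : M x -> p *m x = p *m eps_s x.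
Proof.
move=> hx; apply/eqP; rewrite -subr_eq0 -mulmxBr; apply/eqP.
apply: supp_mul_eq0 => [|w hw]; first exact: MB W _ _ hx (M_eps_s W hx).
by rewrite mulmxBl (clinearB (wk_eps_lin W)) (eps_mul_eps_s W hx hw) subrr.
Qed.

Lemma mul_supp_eps_t x : M x -> x *m p = eps_t x *m p.
Proof.
move=> hx; apply/eqP; rewrite -subr_eq0 -mulmxBl; apply/eqP.
apply: mul_supp_eq0 => [|w hw]; first exact: MB W _ _ hx (M_eps_t W hx).
by rewrite mulmxBr (clinearB (wk_eps_lin W)) (eps_mul_eps_t W hw hx) subrr.
Qed.

Lemma S_supp : S p = p.
Proof.
have MSp := M_S W M_supp.
have Sp_proj : is_proj M (S p).
  split=> //; first by rewrite -(wk_S_antimul W M_supp M_supp) supp_idem.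
  by rewrite -(wk_S_star W M_supp) supp_herm.
have Sp_null : eps (1%:M - S p) = 0.
  rewrite -(wk_S_unital W) -(clinearB (wk_S_lin W)) (wk_eps_S W (MB W (M1 W) M_supp)).
  by case: p_supp.
have pSp : p *m S p = p by case: p_supp => _ _; apply.
have : S (p *m S p) = p *m S p by rewrite (wk_S_antimul W M_supp MSp) (wk_S_invol W M_supp).
by rewrite pSp => ->.
Qed.

(* The kernel projection [C] of [g] lies in [M_s], so [tr C = eps (g C) = 0]. *)
Lemma tr_density_inv : exists2 R, in_Ms M Delta R &
  [/\ mxstar R = R, R *m g = 1%:M, g *m R = 1%:M & forall xi, 0 <= qform R xi].
Proof.
have g_herm := tr_density_herm W.
have [q [r [C_idem C_herm hC CE]]] := kernel_projection g_herm.
set C := horner_mx g q in C_idem C_herm hC CE; set R := horner_mx g r in CE.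
have C0 : C = 0.
  apply: mxtrace_mul_star_eq0.
  rewrite C_herm C_idem (mxtrace_Ms W (Ms_horner q (Ms_tr_density W))) hC.
  exact: (clinear0 (wk_eps_lin W)).
have Rg : R *m g = 1%:M by rewrite -CE C0 subr0.
have gR : g *m R = 1%:M by rewrite -(comm_horner_mx r (commr_refl g)).
have R_herm : mxstar R = R.
  have R'g : mxstar R *m g = 1%:M by rewrite -{1}g_herm -mxstarM gR mxstar1.
  by rewrite -[LHS]mulmx1 -gR mulmxA R'g mul1mx.
exists R; first exact: Ms_horner (Ms_tr_density W).
split=> // xi; have -> : qform R xi = qform g (R *m xi).
  by rewrite /qform -(adjv_herm _ R_herm) -!mulmxA (mulmxA g) gR mul1mx.
exact: (tr_density_psd W).
Qed.

Lemma eps_faithful_Ms v : in_Ms M Delta v -> eps (v *m mxstar v) = 0 -> v = 0.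
Proof.
move=> Ms_v vv0; have [R Ms_R [R_herm _ gR R_psd]] := tr_density_inv.
have : \tr (mxstar v *m R *m v) = 0.
  rewrite -mulmxA mxtrace_mulC -mulmxA (mxtrace_Ms W); last first.
    by apply: (Ms_mul W Ms_R); apply: (Ms_mul W Ms_v); apply: (Ms_star W).
  by rewrite !mulmxA gR mul1mx.
rewrite mxtrace_star_mul_qform => /eqP; rewrite psumr_eq0 // => /allP qv0.
apply/matrixP => i j; have := qv0 j (mem_index_enum _); rewrite implyTb => /eqP.
move=> /(psd_qform_eq0 R_herm R_psd) Rv0.
have : col j v = 0 by rewrite -[col j v]mul1mx -gR -mulmxA Rv0 mulmx0.
by move/(congr1 (fun X : 'cV_n.+1 => X i 0)); rewrite !mxE.
Qed.

(* [v := eps_s (1 - p)] is a self-adjoint element of [M_s] with [p v = 0],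
   so [eps (v v^* ) = eps (1 - p) = 0]. *)
Lemma eps_s_compl_supp : eps_s (1%:M - p) = 0.
Proof.
have M1p : M (1%:M - p) := MB W (M1 W) M_supp.
have S1p : S (1%:M - p) = 1%:M - p.
  by rewrite (clinearB (wk_S_lin W)) (wk_S_unital W) S_supp.
have v_herm : mxstar (eps_s (1%:M - p)) = eps_s (1%:M - p).
  by rewrite (eps_s_star W M1p) S1p mxstarB mxstar1 supp_herm.
have pv : p *m eps_s (1%:M - p) = 0.
  by rewrite -(supp_mul_eps_s M1p) mulmxBr mulmx1 supp_idem subrr.
apply: (eps_faithful_Ms (Ms_eps_s W M1p)).
rewrite v_herm (eps_mul_eps_s W M1p (M_eps_s W M1p)) mulmxBl mul1mx pv subr0.
rewrite -[eps_s _]mulmx1 (eps_mul_eps_s W M1p (M1 W)) mulmx1.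
by case: p_supp.
Qed.

Lemma eps_t_compl_supp : eps_t (1%:M - p) = 0.
Proof.
rewrite (eps_tE W (MB W (M1 W) M_supp)) (clinearB (wk_S_lin W)) (wk_S_unital W) S_supp.
by rewrite eps_s_compl_supp (clinear0 (wk_S_lin W)).
Qed.

Lemma in_Is_It_supp y :
  (in_Is M Delta S y /\ in_It M Delta S y) <-> (M y /\ y = p *m y *m p).
Proof.
have M1p : M (1%:M - p) := MB W (M1 W) M_supp.
split=> [[[My Is_y] [_ It_y]] | [My y_corner]].
  have : y *m (1%:M - p) = 0 by rewrite Is_y // eps_s_compl_supp mulmx0.
  rewrite mulmxBr mulmx1 => /eqP; rewrite subr_eq0 => /eqP yp.
  have : (1%:M - p) *m y = 0 by rewrite It_y // eps_t_compl_supp mul0mx.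
  rewrite mulmxBl mul1mx => /eqP; rewrite subr_eq0 => /eqP py.
  by rewrite -py -yp.
by split; split=> // x hx; rewrite y_corner;
  [rewrite -!mulmxA (supp_mul_eps_s hx) | rewrite !mulmxA (mul_supp_eps_t hx)].
Qed.

End Support.

Unset Implicit Arguments.
Theorem proposition2p2p4 (n : nat) (M : 'M[CC]_n -> Prop)
    (Delta : 'M[CC]_n -> 'M[CC]_(n * n)) (S : 'M[CC]_n -> 'M[CC]_n)
    (eps : 'M[CC]_n -> CC) (p : 'M[CC]_n) :
  weak_kac M Delta S eps -> is_support M eps p ->
  forall y : 'M[CC]_n,
    (in_Is M Delta S y /\ in_It M Delta S y) <-> (M y /\ y = p *m y *m p).
Proof.
case: n M Delta S eps p => [|n] M Delta S eps p W p_supp y.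
  have all_eq (A B : 'M[CC]_0) : A = B by apply/matrixP => [[]].
  by split=> [[[My _] _] | [My _]]; do ?split=> // *; apply: all_eq.
exact: in_Is_It_supp W p_supp y.
Qed.
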